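(* Let $F$, $H$, $X$, $\Omega$, $Q$ and the sequences generated by the IneIREG method be as described in the context, and suppose $H$ is $\mu$-strongly monotone for some $\mu>0$. Suppose $\eta_k\equiv\eta>0$; $\lambda_k\in[\underline\lambda,\overline\lambda]$ for all $k\ge0$ with $0<\underline\lambda\le\overline\lambda<1/L$, $L:=L_F+\eta L_H$; and $\alpha_0\in[0,1]$ and $\alpha_{k+1}\le(1-\beta_k)\alpha_k$ for all $k\ge0$, where $\beta_k:=\big(\frac{1}{1-\lambda_k^2L^2}+\frac{1}{2\lambda_k\eta\mu}\big)^{-1}$. Define $p_{-1}:=1$, $p_k:=\big(\prod_{i=0}^k(1-\beta_i)\big)^{-1}$ for $k\ge0$, for $k\ge1$ $\Lambda_k:=\sum_{j=0}^{k-1}\lambda_j\eta p_j$ and $\overline y_k:=\Lambda_k^{-1}\sum_{j=0}^{k-1}\lambda_j\eta p_jy_j$, and $\beta:=\big(\frac{1}{1-\overline\lambda^2L^2}+\frac{1}{2\underline\lambda\eta\mu}\big)^{-1}\in(0,1)$. Then for all $k\ge1$, $$-B_H\,\mathrm{dist}(\overline y_k,Q)\le\mathrm{Gap}(\overline y_k,H,Q)\le\frac{(1-\beta)^k}{2\underline\lambda\eta}\Big(D_X^2+\sum_{j=0}^{k-1}p_{j-1}\delta_j\Big).$$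
   Context: Work in $\mathbb{R}^n$ with Euclidean inner product $\langle\cdot,\cdot\rangle$ and norm $\|\cdot\|$. The maps $F\colon \mathrm{Dom}\,F\to\mathbb{R}^n$ and $H\colon\mathrm{Dom}\,H\to\mathbb{R}^n$ are monotone and Lipschitz continuous with constants $L_F>0$ and $L_H>0$; $H$ is $\mu$-strongly monotone means $\langle H(x)-H(y),x-y\rangle\ge\mu\|x-y\|^2$ for all $x,y\in\mathrm{Dom}\,H$. $X$ is a nonempty compact convex set and $\Omega$ a nonempty closed convex set with $X\subset\Omega\subset\mathrm{Dom}\,F\cap\mathrm{Dom}\,H$; $P_X,P_\Omega$ denote orthogonal projections. $Q:=\{x\in X:\langle F(x),y-x\rangle\ge0\ \forall y\in X\}$ is assumed nonempty. $D_X:=\sup_{x,y\in X}\|x-y\|$, $B_H:=\sup_{x\in Q}\|H(x)\|$, $\mathrm{dist}(y,Q)$ is the Euclidean distance to $Q$. $\mathrm{Gap}(z,H,Q):=\sup_{x\in Q}\langle H(x),z-x\rangle$. IneIREG method: start with $x_0=x_{-1}\in X$; for $k=0,1,\dots$, with parameters $\alpha_k\ge0$, $\lambda_k>0$, $\eta_k>0$, set $w_k=x_k+\alpha_k(x_k-x_{k-1})$, $w'_k=P_\Omega(w_k)$, $y_k=P_X\big(w_k-\lambda_k(F(w'_k)+\eta_kH(w'_k))\big)$, $x_{k+1}=P_X\big(w_k-\lambda_k(F(y_k)+\eta_kH(y_k))\big)$. Also $\delta_k:=\alpha_k(1+\alpha_k)\|x_k-x_{k-1}\|^2$ for $k\ge0$.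 *)

From HB Require Import structures.
From mathcomp Require Import all_boot all_order all_algebra.
From mathcomp Require Import all_classical all_reals all_analysis.
Set Implicit Arguments. Unset Strict Implicit. Unset Printing Implicit Defensive.
Import Order.TTheory GRing.Theory Num.Theory.
Local Open Scope classical_set_scope.
Local Open Scope ring_scope.

Section Defs.
Variables (R : realType) (n : nat).
Notation V := 'rV[R]_n.

Definition dotp (u v : V) : R := \sum_(i < n) u 0 i * v 0 i.
Definition enorm (u : V) : R := Num.sqrt (dotp u u).

(* topology of R^n (product topology, via the regular ring R^o) *)
Definition vcompact (A : set V) : Prop := compact (A : set 'rV[R^o]_n).
Definition vclosed (A : set V) : Prop := closed (A : set 'rV[R^o]_n).

Definition is_projection (A : set V) (P : V -> V) : Prop :=
  forall z, A (P z) /\ forall x, A x -> enorm (z - P z) <= enorm (z - x).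

Definition ineq_monotone (D : set V) (G : V -> V) : Prop :=
  forall x y, D x -> D y -> 0 <= dotp (G x - G y) (x - y).

Definition ineq_smonotone (D : set V) (G : V -> V) (mu : R) : Prop :=
  forall x y, D x -> D y -> mu * enorm (x - y) ^+ 2 <= dotp (G x - G y) (x - y).

Definition ineq_lipschitz (D : set V) (G : V -> V) (L : R) : Prop :=
  forall x y, D x -> D y -> enorm (G x - G y) <= L * enorm (x - y).

Definition VIsol (F : V -> V) (X : set V) : set V :=
  [set x | X x /\ forall y, X y -> 0 <= dotp (F x) (y - x)].

Definition setdiam (X : set V) : R :=
  sup [set r | exists x y, X x /\ X y /\ r = enorm (x - y)].

Definition normbound (H : V -> V) (Q : set V) : R :=
  sup [set r | exists x, Q x /\ r = enorm (H x)].

Definition setdist (y : V) (Q : set V) : R :=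
  inf [set r | exists x, Q x /\ r = enorm (y - x)].

Definition Gap (z : V) (H : V -> V) (Q : set V) : R :=
  sup [set r | exists x, Q x /\ r = dotp (H x) (z - x)].

(* x k = x_k, and x_{-1} = x_0, so x_{k-1} = x (k.-1) for every k >= 0 *)
Definition inertial (x : nat -> V) (alpha : nat -> R) (k : nat) : V :=
  x k + alpha k *: (x k - x k.-1).

Definition ineq_delta (x : nat -> V) (alpha : nat -> R) (k : nat) : R :=
  alpha k * (1 + alpha k) * enorm (x k - x k.-1) ^+ 2.

Definition IneIREG (F H : V -> V) (PX POm : V -> V)
  (alpha lambda eta : nat -> R) (x y : nat -> V) : Prop :=
  forall k,
    y k = PX (inertial x alpha k - lambda k *:
               (F (POm (inertial x alpha k)) + eta k *: H (POm (inertial x alpha k)))) /\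
    x k.+1 = PX (inertial x alpha k - lambda k *: (F (y k) + eta k *: H (y k))).

End Defs.

Definition betak (R : realType) (lam L eta mu : R) : R :=
  ((1 - lam ^+ 2 * L ^+ 2)^-1 + (2 * lam * eta * mu)^-1)^-1.

(* pprev beta j = p_{j-1} = (prod_{i<j} (1 - beta_i))^{-1}; p_{-1} = 1 *)
Definition pprev (R : realType) (beta : nat -> R) (j : nat) : R :=
  (\prod_(i < j) (1 - beta i))^-1.

Definition pk (R : realType) (beta : nat -> R) (k : nat) : R := pprev beta k.+1.

Definition ineq_Lambda (R : realType) (lambda : nat -> R) (eta : R) (beta : nat -> R) (k : nat) : R :=
  \sum_(j < k) lambda j * eta * pk beta j.

Definition ybar (R : realType) (n : nat) (lambda : nat -> R) (eta : R) (beta : nat -> R)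
  (y : nat -> 'rV[R]_n) (k : nat) : 'rV[R]_n :=
  (ineq_Lambda lambda eta beta k)^-1 *: \sum_(j < k) (lambda j * eta * pk beta j) *: y j.

From HB Require Import structures.
From mathcomp Require Import all_boot all_order all_algebra.
From mathcomp Require Import all_classical all_reals all_analysis.
From mathcomp Require Import ring lra.
Import Order.TTheory GRing.Theory Num.Theory.
Local Open Scope classical_set_scope.
Local Open Scope ring_scope.

(* For a solution q, one IneIREG step is an extragradient step from the inertial
   point w_k for the (L_F + eta L_H)-Lipschitz operator G = F + eta H, so the two
   projection inequalities give
     |x_{k+1} - q|^2 <= |w_k - q|^2 - (1 - lam_k^2 L^2) |w_k - y_k|^2 + 2 lam_k <G y_k, q - y_k>.
   Monotonicity of F, the variational inequality at q and strong monotonicity of H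
   bound the last term by -2 lam_k eta (mu |y_k - q|^2 + <H q, y_k - q>), and a
   harmonic-mean combination of |w_k - y_k|^2 and |y_k - q|^2 produces the factor
   1 - beta_k in front of |w_k - q|^2.  Expanding |w_k - q|^2 through x_k, x_{k-1}
   and delta_k, multiplying by p_k and summing, the condition
   alpha_{k+1} <= (1 - beta_k) alpha_k and the bound D_X on distances in X make the
   inequalities telescope to 2 sum_j lam_j eta p_j <H q, y_j - q> <= D_X^2 + sum_j p_{j-1} delta_j.
   As Lambda_k >= lam_lo eta p_{k-1} >= lam_lo eta (1 - beta)^{-k}, this bounds
   <H q, ybar_k - q> uniformly in q, hence the gap; the lower bound is Cauchy-Schwarz. *)

Set Implicit Arguments. Unset Strict Implicit. Unset Printing Implicit Defensive.

Section InnerProduct.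
Variables (R : realType) (n : nat).
Implicit Types (u v w : 'rV[R]_n) (a : R).

Lemma dotpC u v : dotp u v = dotp v u.
Proof. by apply: eq_bigr => i _; rewrite mulrC. Qed.

Lemma dotpDl u v w : dotp (u + v) w = dotp u w + dotp v w.
Proof. by rewrite /dotp -big_split; apply: eq_bigr => i _; rewrite mxE mulrDl. Qed.

Lemma dotpZl a u v : dotp (a *: u) v = a * dotp u v.
Proof. by rewrite /dotp mulr_sumr; apply: eq_bigr => i _; rewrite mxE mulrA. Qed.

Lemma dotpNl u v : dotp (- u) v = - dotp u v.
Proof. by rewrite -scaleN1r dotpZl mulN1r. Qed.

Lemma dotpBl u v w : dotp (u - v) w = dotp u w - dotp v w.
Proof. by rewrite dotpDl dotpNl. Qed.

Lemma dotpDr u v w : dotp u (v + w) = dotp u v + dotp u w.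
Proof. by rewrite dotpC dotpDl !(dotpC u). Qed.

Lemma dotpZr a u v : dotp u (a *: v) = a * dotp u v.
Proof. by rewrite dotpC dotpZl dotpC. Qed.

Lemma dotpNr u v : dotp u (- v) = - dotp u v.
Proof. by rewrite dotpC dotpNl dotpC. Qed.

Lemma dotpBr u v w : dotp u (v - w) = dotp u v - dotp u w.
Proof. by rewrite dotpDr dotpNr. Qed.

Lemma dotp0l v : dotp 0 v = 0.
Proof. by rewrite /dotp big1 // => i _; rewrite mxE mul0r. Qed.

Lemma dotp_sumr I (r : seq I) (P : pred I) (f : I -> 'rV[R]_n) u :
  dotp u (\sum_(i <- r | P i) f i) = \sum_(i <- r | P i) dotp u (f i).
Proof.
elim/big_rec2: _ => [|i s t _ <-]; last by rewrite dotpDr.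
by rewrite dotpC dotp0l.
Qed.

Lemma dotp_ge0 u : 0 <= dotp u u.
Proof. by apply: sumr_ge0 => i _; rewrite -expr2 sqr_ge0. Qed.

Lemma dotp_eq0 u : (dotp u u == 0) = (u == 0).
Proof.
apply/eqP/eqP => [u0|->]; last exact: dotp0l.
apply/rowP => i; rewrite mxE; apply/eqP; rewrite -sqrf_eq0 expr2.
by rewrite (psumr_eq0P _ u0) // => j _; rewrite -expr2 sqr_ge0.
Qed.

Lemma dotp_normD u v : dotp (u + v) (u + v) = dotp u u + 2 * dotp u v + dotp v v.
Proof. by rewrite !(dotpDl, dotpDr) (dotpC v u); ring. Qed.

Lemma dotp_normB u v : dotp (u - v) (u - v) = dotp u u - 2 * dotp u v + dotp v v.
Proof. by rewrite !(dotpBl, dotpBr) (dotpC v u); ring. Qed.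

Lemma enorm_ge0 u : 0 <= enorm u.
Proof. exact: sqrtr_ge0. Qed.

Lemma enorm_sq u : enorm u ^+ 2 = dotp u u.
Proof. by rewrite sqr_sqrtr ?dotp_ge0. Qed.

Lemma enorm_gt0 u : u != 0 -> 0 < enorm u.
Proof. by move=> u0; rewrite sqrtr_gt0 lt_def dotp_eq0 u0 dotp_ge0. Qed.

Lemma enormN u : enorm (- u) = enorm u.
Proof. by rewrite /enorm dotpNl dotpNr opprK. Qed.

Lemma enormZ a u : 0 <= a -> enorm (a *: u) = a * enorm u.
Proof.
move=> a0; rewrite /enorm dotpZl dotpZr mulrA sqrtrM ?mulr_ge0 //.
by rewrite -expr2 sqrtr_sqr ger0_norm.
Qed.

Lemma dotp_le_enorm u v : dotp u v <= enorm u * enorm v.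
Proof.
have [->|u0] := eqVneq u 0; first by rewrite dotp0l mulr_ge0 ?enorm_ge0.
have [->|v0] := eqVneq v 0; first by rewrite dotpC dotp0l mulr_ge0 ?enorm_ge0.
have ab_gt0 : 0 < enorm u * enorm v by rewrite mulr_gt0 ?enorm_gt0.
have expand : dotp (enorm v *: u - enorm u *: v) (enorm v *: u - enorm u *: v)
    = 2 * (enorm u * enorm v) * (enorm u * enorm v - dotp u v).
  by rewrite dotp_normB !(dotpZl, dotpZr) -(enorm_sq u) -(enorm_sq v); ring.
have := dotp_ge0 (enorm v *: u - enorm u *: v).
by rewrite expand pmulr_rge0 ?subr_ge0 // mulr_gt0.
Qed.

Lemma enormD u v : enorm (u + v) <= enorm u + enorm v.
Proof.
rewrite -(ler_pXn2r (n := 2)) ?nnegrE ?addr_ge0 ?enorm_ge0 //.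
rewrite enorm_sq sqrrD !enorm_sq dotp_normD.
by have := dotp_le_enorm u v; lra.
Qed.

(* This is where the contraction factor [betak] comes from. *)
Lemma dotp_harmonic_le c1 c2 u v : 0 < c1 -> 0 < c2 ->
  (c1^-1 + c2^-1)^-1 * dotp (u + v) (u + v) <= c1 * dotp u u + c2 * dotp v v.
Proof.
move=> c1_gt0 c2_gt0.
have -> : (c1^-1 + c2^-1)^-1 = c1 * c2 / (c1 + c2).
  by field; rewrite ?gt_eqF ?addr_gt0.
rewrite mulrAC ler_pdivrMr ?addr_gt0 //.
have := dotp_ge0 (c1 *: u - c2 *: v).
by rewrite dotp_normB !(dotpZl, dotpZr) dotp_normD; nra.
Qed.

End InnerProduct.

Lemma inertial_dist_sq (R : realType) (n : nat) (x : nat -> 'rV[R]_n) (alpha : nat -> R) k z :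
  dotp (inertial x alpha k - z) (inertial x alpha k - z)
    = (1 + alpha k) * dotp (x k - z) (x k - z) - alpha k * dotp (x k.-1 - z) (x k.-1 - z)
      + ineq_delta x alpha k.
Proof.
rewrite /inertial /ineq_delta enorm_sq.
have -> : x k + alpha k *: (x k - x k.-1) - z
    = (1 + alpha k) *: (x k - z) - alpha k *: (x k.-1 - z).
  by apply/rowP => i; rewrite !mxE; ring.
have -> : x k - x k.-1 = (x k - z) - (x k.-1 - z).
  by apply/rowP => i; rewrite !mxE; ring.
rewrite (dotp_normB ((1 + alpha k) *: _)) (dotp_normB (x k - z)).
by rewrite !(dotpZl, dotpZr); ring.
Qed.

Section Projection.
Variables (R : realType) (n : nat) (A : set 'rV[R]_n) (P : 'rV[R]_n -> 'rV[R]_n).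
Hypotheses (cvxA : convex_set A) (projP : is_projection A P).

(* If the angle were acute, a point of the segment [P z, x] would be closer to z. *)
Lemma projection_obtuse z x : A x -> dotp (z - P z) (x - P z) <= 0.
Proof.
move=> Ax; have [Ap Pmin] := projP z; set p := P z in Ap Pmin *.
rewrite leNgt; apply/negP => c_gt0.
set c := dotp (z - p) (x - p) in c_gt0; set d := dotp (x - p) (x - p).
have d_ge0 : 0 <= d by apply: dotp_ge0.
pose t := c / (d + c).
have t_ge0 : 0 <= t by rewrite divr_ge0 // ?addr_ge0 // ltW.
have t_le1 : t <= 1 by rewrite ler_pdivrMr ?mul1r ?lerDr // ltr_wpDl.
have := cvxA (Itv01 t_ge0 t_le1) (mem_set Ax) (mem_set Ap).
rewrite inE /conv /= => /Pmin.
rewrite /enorm ler_sqrt ?dotp_ge0 //.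
have -> : z - (t *: x + (1 - t) *: p) = (z - p) - t *: (x - p).
  by apply/rowP => i; rewrite !mxE; ring.
rewrite (dotp_normB (z - p) (t *: _)) !(dotpZl, dotpZr) -/c -/d => near.
have : t * d < c.
  by rewrite /t mulrAC ltr_pdivrMr ?ltr_wpDl // mulrDr ltrDl mulr_gt0.
have : 2 * c <= t * d.
  have : 0 <= t * (t * d - 2 * c) by lra.
  by rewrite pmulr_rge0 ?subr_ge0 // divr_gt0 // ltr_wpDl.
lra.
Qed.

Lemma projection_descent w g x : A x ->
  dotp (P (w - g) - x) (P (w - g) - x)
    <= dotp (w - x) (w - x) - dotp (w - P (w - g)) (w - P (w - g))
       + 2 * dotp g (x - P (w - g)).
Proof.
move=> Ax; have := projection_obtuse (w - g) Ax; set p := P (w - g).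
have -> : w - g - p = (w - p) - g by apply/rowP => i; rewrite !mxE; ring.
have -> : w - x = (w - p) - (x - p) by apply/rowP => i; rewrite !mxE; ring.
rewrite -(opprB x p) dotpNl dotpNr opprK (dotpBl (w - p) g) (dotp_normB (w - p) (x - p)).
lra.
Qed.

End Projection.

Lemma vcompact_dist_bounded (R : realType) (n : nat) (X : set 'rV[R]_n) :
  vcompact X -> exists D, forall u v, X u -> X v -> enorm (u - v) <= D.
Proof.
move=> /compact_bounded [M [_ hM]].
have bnd := hM (M + 1) ltac:(by rewrite ltrDl).
have coord (u : 'rV[R^o]_n) i : `|u 0 i| <= `|u|.
  have /mapP[j _ ->] : `|u 0 i| \in [seq `|u k.1 k.2| | k : 'I_1 * 'I_n].
    by apply/mapP; exists (0, i) => //=; rewrite mem_enum.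
  by rewrite [leRHS]/Num.norm /= mx_normrE; apply/bigmax_geP; right; exists j.
exists (Num.sqrt (n%:R * (2 * (M + 1)) ^+ 2)) => u v Xu Xv.
rewrite /enorm ler_sqrt; last by rewrite mulr_ge0 // sqr_ge0.
rewrite (_ : n%:R * _ = \sum_(i < n) (2 * (M + 1)) ^+ 2); last first.
  by rewrite sumr_const card_ord mulr_natl.
apply: ler_sum => i _.
rewrite -expr2 -real_normK ?num_real // lerXn2r ?nnegrE ?normr_ge0 //.
  by rewrite mulr_ge0 // (le_trans _ (bnd u Xu)) // (le_trans _ (coord u i)).
rewrite !mxE; apply: le_trans (ler_normB _ _) _.
by have := coord u i; have := coord v i; have := bnd u Xu; have := bnd v Xv; rewrite /=; lra.
Qed.

Lemma enorm_le_setdiam (R : realType) (n : nat) (X : set 'rV[R]_n) u v :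
  vcompact X -> X u -> X v -> enorm (u - v) <= setdiam X.
Proof.
move=> /vcompact_dist_bounded [D bnd] Xu Xv; apply: ub_le_sup; last by exists u, v.
by exists D => _ [a [b [Xa [Xb ->]]]]; exact: bnd.
Qed.

Section Extragradient.
Variables (R : realType) (n : nat) (X Om : set 'rV[R]_n).
Variables (PX POm G : 'rV[R]_n -> 'rV[R]_n) (L : R).
Hypotheses (cvxX : convex_set X) (cvxOm : convex_set Om) (XOm : X `<=` Om).
Hypotheses (projX : is_projection X PX) (projOm : is_projection Om POm).
Hypothesis lipG : ineq_lipschitz Om G L.

Lemma extragradient_descent lam w x y x1 : X x ->
  y = PX (w - lam *: G (POm w)) -> x1 = PX (w - lam *: G y) ->
  dotp (x1 - x) (x1 - x) <= dotp (w - x) (w - x)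
    - (1 - lam ^+ 2 * L ^+ 2) * dotp (w - y) (w - y) + 2 * lam * dotp (G y) (x - y).
Proof.
move=> Xx ey ex1; set w' := POm w.
have Xy : X y by rewrite ey; apply: (projX _).1.
have Xx1 : X x1 by rewrite ex1; apply: (projX _).1.
have Omw' : Om w' by apply: (projOm _).1.
have descent1 := projection_descent cvxX projX w (lam *: G y) Xx.
have descent2 := projection_descent cvxX projX w (lam *: G w') Xx1.
have descent3 := projection_descent cvxOm projOm w 0 (XOm Xy).
have split_x1 : x - x1 = (x - y) + (y - x1) by apply/rowP => i; rewrite !mxE; ring.
rewrite -ex1 dotpZl split_x1 (dotpDr (G y)) in descent1.
rewrite -ey dotpZl -(opprB y x1) dotpNr in descent2.
rewrite subr0 dotp0l mulr0 addr0 -/w' in descent3.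
have lipGG : dotp (G w' - G y) (G w' - G y) <= L ^+ 2 * dotp (w' - y) (w' - y).
  rewrite -!enorm_sq -exprMn.
  by have := enorm_ge0 (G w' - G y); have := lipG Omw' (XOm Xy); nra.
have young : - (2 * lam * dotp (G w' - G y) (y - x1))
    <= lam ^+ 2 * dotp (G w' - G y) (G w' - G y) + dotp (y - x1) (y - x1).
  have := dotp_ge0 (lam *: (G w' - G y) + (y - x1)).
  by rewrite (dotp_normD (lam *: _)) !(dotpZl, dotpZr); lra.
rewrite dotpBl in young.
have := ler_wpM2l (sqr_ge0 lam) lipGG.
have : lam ^+ 2 * (L ^+ 2 * dotp (w' - y) (w' - y))
    <= lam ^+ 2 * (L ^+ 2 * dotp (w - y) (w - y)).
  by rewrite ler_wpM2l ?sqr_ge0 // ler_wpM2l ?sqr_ge0 //; have := dotp_ge0 (w - w'); lra.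
lra.
Qed.

End Extragradient.

Lemma lipschitz_regularized (R : realType) (n : nat) (F H : 'rV[R]_n -> 'rV[R]_n)
    (DomF DomH A : set 'rV[R]_n) (LF LH eta : R) :
  0 <= eta -> A `<=` DomF `&` DomH ->
  ineq_lipschitz DomF F LF -> ineq_lipschitz DomH H LH ->
  ineq_lipschitz A (fun v => F v + eta *: H v) (LF + eta * LH).
Proof.
move=> eta_ge0 AD lipF lipH u v Au Av.
have [DFu DHu] := AD _ Au; have [DFv DHv] := AD _ Av.
have -> : F u + eta *: H u - (F v + eta *: H v) = (F u - F v) + eta *: (H u - H v).
  by apply/rowP => i; rewrite !mxE; ring.
apply: le_trans (enormD _ _) _; rewrite enormZ // mulrDl -mulrA.
by rewrite lerD ?lipF // ler_wpM2l ?lipH.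
Qed.

Lemma regularized_vi_bound (R : realType) (n : nat) (F H : 'rV[R]_n -> 'rV[R]_n)
    (DomF DomH X : set 'rV[R]_n) (mu eta : R) x y :
  0 <= eta -> ineq_monotone DomF F -> ineq_smonotone DomH H mu ->
  X `<=` DomF `&` DomH -> VIsol F X x -> X y ->
  dotp (F y + eta *: H y) (x - y)
    <= - eta * (mu * dotp (y - x) (y - x) + dotp (H x) (y - x)).
Proof.
move=> eta_ge0 monF smonH XD [Xx solx] Xy.
have [DFy DHy] := XD _ Xy; have [DFx DHx] := XD _ Xx.
have monFyx := monF _ _ DFy DFx; have smonHyx := smonH _ _ DHy DHx.
rewrite (dotpBl (F y)) in monFyx; rewrite enorm_sq (dotpBl (H y)) in smonHyx.
have := solx _ Xy; have := ler_wpM2l eta_ge0 smonHyx.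
rewrite (dotpDl (F y)) dotpZl -(opprB y x) !dotpNr; lra.
Qed.

Section StepParameters.
Variable R : realType.
Implicit Types (lam L eta mu : R) (b : nat -> R).

Lemma sqr_mul_lt1 lam L : 0 <= lam -> 0 < L -> lam < L^-1 -> lam ^+ 2 * L ^+ 2 < 1.
Proof.
move=> lam_ge0 L_gt0; rewrite -(ltr_pM2r L_gt0) mulVf ?gt_eqF // -exprMn => lamL.
by rewrite expr2; have := mulr_ge0 lam_ge0 (ltW L_gt0); nra.
Qed.

Lemma betak_lt1 lam L eta mu : 0 < lam -> 0 < eta -> 0 < mu ->
  lam ^+ 2 * L ^+ 2 < 1 -> betak lam L eta mu < 1.
Proof.
move=> lam_gt0 eta_gt0 mu_gt0 lamL; rewrite /betak invf_lt1; last first.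
  by rewrite addr_gt0 // invr_gt0 ?subr_gt0 // !mulr_gt0.
have c1_le1 : 1 - lam ^+ 2 * L ^+ 2 <= 1 by rewrite lerBlDr lerDl mulr_ge0 ?sqr_ge0.
have : 1 <= (1 - lam ^+ 2 * L ^+ 2)^-1 by rewrite invf_ge1 ?subr_gt0.
have : 0 < (2 * lam * eta * mu)^-1 by rewrite invr_gt0 !mulr_gt0.
lra.
Qed.

Lemma betak_ge lo hi lam L eta mu : 0 < lo -> lo <= lam <= hi -> 0 < eta -> 0 < mu ->
  hi ^+ 2 * L ^+ 2 < 1 ->
  ((1 - hi ^+ 2 * L ^+ 2)^-1 + (2 * lo * eta * mu)^-1)^-1 <= betak lam L eta mu.
Proof.
move=> lo_gt0 /andP[lo_lam lam_hi] eta_gt0 mu_gt0 hiL.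
have lam_gt0 : 0 < lam := lt_le_trans lo_gt0 lo_lam.
have c1_le : 1 - hi ^+ 2 * L ^+ 2 <= 1 - lam ^+ 2 * L ^+ 2.
  by rewrite lerD2l lerN2 ler_wpM2r ?sqr_ge0 // !expr2; nra.
have c1_gt0 : 0 < 1 - hi ^+ 2 * L ^+ 2 by rewrite subr_gt0.
have c2_le : 2 * lo * eta * mu <= 2 * lam * eta * mu by rewrite !ler_pM2r // ler_pM2l.
have c2_gt0 : 0 < 2 * lo * eta * mu by rewrite !mulr_gt0.
have c1_gt0' := lt_le_trans c1_gt0 c1_le; have c2_gt0' := lt_le_trans c2_gt0 c2_le.
rewrite /betak lef_pV2 ?posrE ?addr_gt0 ?invr_gt0 //.
by rewrite lerD // lef_pV2 ?posrE.
Qed.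

Lemma pprev0 b : pprev b 0 = 1.
Proof. by rewrite /pprev big_ord0 invr1. Qed.

Lemma pprev_gt0 b j : (forall i, b i < 1) -> 0 < pprev b j.
Proof. by move=> b_lt1; rewrite invr_gt0 prodr_gt0 // => i _; rewrite subr_gt0. Qed.

Lemma pprevS b j : (forall i, b i < 1) -> pprev b j.+1 * (1 - b j) = pprev b j.
Proof.
move=> b_lt1; rewrite /pprev big_ord_recr /= invfM -mulrA mulVf ?mulr1 //.
by rewrite subr_eq0 eq_sym lt_eqF.
Qed.

Lemma pprev_inv_le b beta j : (forall i, b i < 1) -> (forall i, beta <= b i) ->
  (pprev b j)^-1 <= (1 - beta) ^+ j.
Proof.
move=> b_lt1 beta_le; rewrite invrK -[j in _ ^+ j]card_ord -prodr_const.
by apply: ler_prod => i _; rewrite subr_ge0 ltW //= lerD2l lerN2.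
Qed.

End StepParameters.

Section InertialRecursion.
Variables (R : realFieldType) (A alpha beta d c g P : nat -> R) (D2 : R).
Hypotheses (A_bound : forall j, 0 <= A j <= D2).
Hypotheses (alpha_ge0 : forall j, 0 <= alpha j) (alpha0_le1 : alpha 0%N <= 1).
Hypothesis alphaS_le : forall j, alpha j.+1 <= (1 - beta j) * alpha j.
Hypotheses (P0 : P 0%N = 1) (P_gt0 : forall j, 0 < P j).
Hypothesis PS : forall j, P j.+1 * (1 - beta j) = P j.
Hypothesis A_step : forall j,
  A j.+1 <= (1 - beta j) * ((1 + alpha j) * A j - alpha j * A j.-1 + d j) - 2 * c j * g j.

(* Multiplied by [P j.+1], the step inequality makes [P j * (A j - alpha j * A j.-1)]
   telescope; [alphaS_le] absorbs the inertial term [P j * alpha j * A j] into [D2]. *)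
Lemma inertial_telescope K :
  2 * (\sum_(j < K) c j * P j.+1 * g j) + P K * (A K - alpha K * A K.-1)
    <= \sum_(j < K) P j * d j + D2 * (1 - P K * alpha K).
Proof.
elim: K => [|K IH].
  rewrite !big_ord0 P0 /= !mul1r mulr0 !add0r.
  have [A0_ge0 A0_le] := andP (A_bound 0%N).
  have : (1 - alpha 0%N) * A 0%N <= (1 - alpha 0%N) * D2 by rewrite ler_wpM2l ?subr_ge0.
  lra.
rewrite !big_ord_recr /=.
have : P K.+1 * A K.+1 <= P K.+1 * ((1 - beta K) *
    ((1 + alpha K) * A K - alpha K * A K.-1 + d K) - 2 * c K * g K).
  by rewrite ler_pM2l.
rewrite mulrBr mulrA PS.
have alpha_P : P K.+1 * alpha K.+1 <= P K * alpha K.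
  by rewrite -(PS K) -mulrA ler_pM2l.
have [AK_ge0 AK_le] := andP (A_bound K).
have : (P K * alpha K - P K.+1 * alpha K.+1) * A K
    <= (P K * alpha K - P K.+1 * alpha K.+1) * D2 by rewrite ler_wpM2l ?subr_ge0.
lra.
Qed.

Lemma inertial_weighted_sum_le K :
  2 * (\sum_(j < K) c j * P j.+1 * g j) <= \sum_(j < K) P j * d j + D2.
Proof.
have := inertial_telescope K.
have [AKm_ge0 AKm_le] := andP (A_bound K.-1); have [AK_ge0 _] := andP (A_bound K).
have : 0 <= P K * A K by rewrite mulr_ge0 // ltW.
have : 0 <= P K * alpha K * (D2 - A K.-1) by rewrite !mulr_ge0 ?subr_ge0 // ltW.
lra.
Qed.

End InertialRecursion.

Section GapBounds.
Variables (R : realType) (n : nat) (H : 'rV[R]_n -> 'rV[R]_n) (Q : set 'rV[R]_n).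
Variables (z : 'rV[R]_n) (M : R).
Hypotheses (Q0 : Q !=set0) (gap_le : forall q, Q q -> dotp (H q) (z - q) <= M).

Lemma Gap_le : Gap z H Q <= M.
Proof.
apply: ge_sup => [|_ [q [Qq ->]]]; last exact: gap_le.
by have [q Qq] := Q0; exists (dotp (H q) (z - q)), q.
Qed.

Lemma dotp_le_Gap q : Q q -> dotp (H q) (z - q) <= Gap z H Q.
Proof.
move=> Qq; apply: ub_le_sup; last by exists q.
by exists M => _ [p [Qp ->]]; exact: gap_le.
Qed.

Lemma Gap_ge_setdist : has_ubound [set r | exists q, Q q /\ r = enorm (H q)] ->
  - normbound H Q * setdist z Q <= Gap z H Q.
Proof.
move=> Hq_bounded; set B := normbound H Q.
have le_B q : Q q -> enorm (H q) <= B.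
  by move=> Qq; apply: (ub_le_sup Hq_bounded); exists q.
have lower q : Q q -> - (B * enorm (z - q)) <= Gap z H Q.
  move=> Qq; apply: le_trans (dotp_le_Gap Qq); rewrite lerNl -dotpNl.
  by rewrite (le_trans (dotp_le_enorm _ _)) // enormN ler_wpM2r ?enorm_ge0 ?le_B.
have [q Qq] := Q0.
have [B0|B_neq0] := eqVneq B 0.
  by have := lower q Qq; rewrite B0 mulNr !mul0r.
have B_gt0 : 0 < B by rewrite lt_def B_neq0 (le_trans (enorm_ge0 _) (le_B q Qq)).
rewrite mulNr lerNl mulrC -ler_pdivrMr //.
apply: lb_le_inf => [|_ [p [Qp ->]]]; first by exists (enorm (z - q)), q.
by rewrite ler_pdivrMr // mulrC lerNl lower.
Qed.

End GapBounds.

Lemma lipschitz_norm_has_ubound (R : realType) (n : nat) (H : 'rV[R]_n -> 'rV[R]_n)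
    (D X Q : set 'rV[R]_n) (LH : R) :
  vcompact X -> X !=set0 -> X `<=` D -> ineq_lipschitz D H LH -> 0 <= LH -> Q `<=` X ->
  has_ubound [set r | exists q, Q q /\ r = enorm (H q)].
Proof.
move=> cpX [x0 Xx0] XD lipH LH_ge0 QX.
exists (enorm (H x0) + LH * setdiam X) => _ [q [/QX Xq ->]].
have -> : H q = H x0 + (H q - H x0) by rewrite addrC subrK.
rewrite (le_trans (enormD _ _)) // lerD2l.
rewrite (le_trans (lipH _ _ (XD _ Xq) (XD _ Xx0))) // ler_wpM2l //.
exact: enorm_le_setdiam.
Qed.

Lemma dotp_ybar (R : realType) (n : nat) (lambda : nat -> R) (eta : R) (b : nat -> R)
    (y : nat -> 'rV[R]_n) K h z :
  ineq_Lambda lambda eta b K != 0 ->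
  dotp h (ybar lambda eta b y K - z) = (ineq_Lambda lambda eta b K)^-1
    * \sum_(j < K) lambda j * eta * pk b j * dotp h (y j - z).
Proof.
move=> Lambda_neq0; rewrite dotpBr /ybar dotpZr dotp_sumr.
under eq_bigr do rewrite dotpZr.
under [in RHS]eq_bigr do rewrite dotpBr mulrBr.
by rewrite sumrB -mulr_suml -/(ineq_Lambda lambda eta b K); field.
Qed.

Section IneIREG.
Variables (R : realType) (n : nat).
Variables (F H : 'rV[R]_n -> 'rV[R]_n) (DomF DomH X Om : set 'rV[R]_n).
Variables (PX POm : 'rV[R]_n -> 'rV[R]_n) (LF LH mu eta lam_lo lam_hi : R).
Variables (alpha lambda : nat -> R) (x y : nat -> 'rV[R]_n).
Let L := LF + eta * LH.
Let beta_ k := betak (lambda k) L eta mu.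
Let beta := ((1 - lam_hi ^+ 2 * L ^+ 2)^-1 + (2 * lam_lo * eta * mu)^-1)^-1.
Hypotheses (mu_gt0 : 0 < mu) (eta_gt0 : 0 < eta).
Hypotheses (monF : ineq_monotone DomF F) (lipF : ineq_lipschitz DomF F LF).
Hypotheses (lipH : ineq_lipschitz DomH H LH) (smonH : ineq_smonotone DomH H mu).
Hypotheses (cpX : vcompact X) (cvxX : convex_set X) (cvxOm : convex_set Om).
Hypotheses (XOm : X `<=` Om) (OmD : Om `<=` DomF `&` DomH).
Hypotheses (projX : is_projection X PX) (projOm : is_projection Om POm).
Hypotheses (lam_lo_gt0 : 0 < lam_lo) (lambda_in : forall k, lam_lo <= lambda k <= lam_hi).
Hypothesis lam_hiL : lam_hi ^+ 2 * L ^+ 2 < 1.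
Hypotheses (alpha_ge0 : forall k, 0 <= alpha k) (alpha0_le1 : alpha 0%N <= 1).
Hypothesis alphaS_le : forall k, alpha k.+1 <= (1 - beta_ k) * alpha k.
Hypotheses (Xx0 : X (x 0%N)) (iter : IneIREG F H PX POm alpha lambda (fun _ => eta) x y).

Fact lambda_gt0 k : 0 < lambda k.
Proof. by case/andP: (lambda_in k) => lo_le _; exact: lt_le_trans lo_le. Qed.

Fact lambda_sqr_lt1 k : lambda k ^+ 2 * L ^+ 2 < 1.
Proof.
apply: le_lt_trans lam_hiL; rewrite ler_wpM2r ?sqr_ge0 //.
by have := lambda_gt0 k; case/andP: (lambda_in k) => _ le_hi; rewrite !expr2; nra.
Qed.

Fact beta_lt1 k : beta_ k < 1.
Proof. exact: betak_lt1 (lambda_gt0 k) eta_gt0 mu_gt0 (lambda_sqr_lt1 k). Qed.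

Fact beta_le k : beta <= beta_ k.
Proof. exact: betak_ge lam_lo_gt0 (lambda_in k) eta_gt0 mu_gt0 lam_hiL. Qed.

Fact pprev_beta_gt0 j : 0 < pprev beta_ j.
Proof. exact: pprev_gt0 beta_lt1. Qed.

Fact delta_ge0 k : 0 <= ineq_delta x alpha k.
Proof.
have alpha_k_ge0 := alpha_ge0 k.
by rewrite /ineq_delta mulr_ge0 ?sqr_ge0 // mulr_ge0 // addr_ge0.
Qed.

Lemma IneIREG_x_in k : X (x k).
Proof. by case: k => [|k] //; rewrite (iter k).2; apply: (projX _).1. Qed.

Lemma IneIREG_y_in k : X (y k).
Proof. by rewrite (iter k).1; apply: (projX _).1. Qed.

Lemma IneIREG_step k q : VIsol F X q ->
  dotp (x k.+1 - q) (x k.+1 - q)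
    <= (1 - beta_ k) * ((1 + alpha k) * dotp (x k - q) (x k - q)
         - alpha k * dotp (x k.-1 - q) (x k.-1 - q) + ineq_delta x alpha k)
       - 2 * (lambda k * eta) * dotp (H q) (y k - q).
Proof.
move=> Qq; have [ey ex1] := iter k.
have XD : X `<=` DomF `&` DomH by move=> u /XOm /OmD.
have descent := extragradient_descent cvxX cvxOm XOm projX projOm
  (lipschitz_regularized (ltW eta_gt0) OmD lipF lipH) Qq.1 ey ex1.
have vi := regularized_vi_bound (ltW eta_gt0) monF smonH XD Qq (IneIREG_y_in k).
have lam2_ge0 : 0 <= 2 * lambda k by rewrite mulr_ge0 ?ltW ?lambda_gt0.
have c1_gt0 : 0 < 1 - lambda k ^+ 2 * L ^+ 2 by rewrite subr_gt0 lambda_sqr_lt1.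
have c2_gt0 : 0 < 2 * lambda k * eta * mu by rewrite !mulr_gt0 ?lambda_gt0.
rewrite -/L /= in descent; have := ler_wpM2l lam2_ge0 vi.
have := dotp_harmonic_le (inertial x alpha k - y k) (y k - q) c1_gt0 c2_gt0.
by rewrite subrKA -inertial_dist_sq /beta_ /betak; lra.
Qed.

Lemma IneIREG_weighted_sum K q : VIsol F X q ->
  2 * (\sum_(j < K) lambda j * eta * pk beta_ j * dotp (H q) (y j - q))
    <= \sum_(j < K) pprev beta_ j * ineq_delta x alpha j + setdiam X ^+ 2.
Proof.
move=> Qq.
apply: (inertial_weighted_sum_le (A := fun j => dotp (x j - q) (x j - q))
  (beta := beta_) (d := ineq_delta x alpha) (c := fun j => lambda j * eta)
  (g := fun j => dotp (H q) (y j - q)) (P := pprev beta_)) => //.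
- move=> j; rewrite dotp_ge0 /= -enorm_sq.
  have := enorm_le_setdiam cpX (IneIREG_x_in j) Qq.1; have := enorm_ge0 (x j - q).
  nra.
- exact: pprev0.
- exact: pprev_beta_gt0.
- by move=> j; apply: pprevS beta_lt1.
- by move=> j; apply: IneIREG_step.
Qed.

Lemma ineq_Lambda_ge K : (0 < K)%N ->
  lam_lo * eta * pprev beta_ K <= ineq_Lambda lambda eta beta_ K.
Proof.
case: K => [//|K] _; rewrite /ineq_Lambda big_ord_recr /= ler_wpDl //.
  by apply: sumr_ge0 => j _; rewrite /pk !mulr_ge0 ?ltW ?lambda_gt0 ?pprev_beta_gt0.
by rewrite /pk ler_pM2r ?pprev_beta_gt0 // ler_pM2r //; case/andP: (lambda_in K).
Qed.

Lemma ineq_Lambda_inv_le K : (0 < K)%N ->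
  (ineq_Lambda lambda eta beta_ K)^-1 <= (1 - beta) ^+ K / (lam_lo * eta).
Proof.
move=> K_gt0; have Lambda_ge := ineq_Lambda_ge K_gt0.
have lo_gt0 : 0 < lam_lo * eta * pprev beta_ K by rewrite !mulr_gt0 ?pprev_beta_gt0.
apply: le_trans (_ : (lam_lo * eta * pprev beta_ K)^-1 <= _).
  by rewrite lef_pV2 ?posrE // (lt_le_trans lo_gt0).
rewrite invfM mulrC ler_wpM2r ?invr_ge0 ?mulr_ge0 ?(ltW lam_lo_gt0) ?(ltW eta_gt0) //.
exact: pprev_inv_le beta_lt1 beta_le.
Qed.

Lemma IneIREG_ybar_gap_le K q : (0 < K)%N -> VIsol F X q ->
  dotp (H q) (ybar lambda eta beta_ y K - q)
    <= (1 - beta) ^+ K / (2 * lam_lo * eta)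
       * (setdiam X ^+ 2 + \sum_(j < K) pprev beta_ j * ineq_delta x alpha j).
Proof.
move=> K_gt0 Qq; have Lambda_inv := ineq_Lambda_inv_le K_gt0.
have Lambda_gt0 : 0 < ineq_Lambda lambda eta beta_ K.
  by apply: lt_le_trans (ineq_Lambda_ge K_gt0); rewrite !mulr_gt0 ?pprev_beta_gt0.
rewrite dotp_ybar ?gt_eqF //; set Lambda := ineq_Lambda _ _ _ _ in Lambda_inv Lambda_gt0 *.
have := IneIREG_weighted_sum K Qq.
set S := \sum_(j < K) _ * dotp _ _; set T := \sum_(j < K) _.
have T_ge0 : 0 <= T.
  by apply: sumr_ge0 => j _; rewrite mulr_ge0 ?delta_ge0 ?ltW ?pprev_beta_gt0.
have D2_ge0 := sqr_ge0 (setdiam X) => sum_le.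
have : Lambda^-1 * S <= Lambda^-1 * ((T + setdiam X ^+ 2) / 2).
  by apply: ler_wpM2l; [rewrite invr_ge0 ltW | lra].
have : Lambda^-1 * ((T + setdiam X ^+ 2) / 2)
    <= (1 - beta) ^+ K / (lam_lo * eta) * ((T + setdiam X ^+ 2) / 2).
  by apply: ler_wpM2r => //; lra.
have -> : (1 - beta) ^+ K / (lam_lo * eta) * ((T + setdiam X ^+ 2) / 2)
    = (1 - beta) ^+ K / (2 * lam_lo * eta) * (setdiam X ^+ 2 + T).
  by field; rewrite !gt_eqF.
lra.
Qed.

End IneIREG.

Theorem proposition4p10 (R : realType) (n : nat)
  (F H : 'rV[R]_n -> 'rV[R]_n) (DomF DomH X Om : set 'rV[R]_n)
  (PX POm : 'rV[R]_n -> 'rV[R]_n) (LF LH mu eta lam_lo lam_hi : R)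
  (alpha lambda : nat -> R) (x y : nat -> 'rV[R]_n) :
  (* F, H monotone, Lipschitz; H strongly monotone *)
  0 < LF -> 0 < LH -> 0 < mu ->
  ineq_monotone DomF F -> ineq_lipschitz DomF F LF ->
  ineq_monotone DomH H -> ineq_lipschitz DomH H LH ->
  ineq_smonotone DomH H mu ->
  (* X nonempty compact convex, Om nonempty closed convex, X ⊂ Om ⊂ DomF ∩ DomH *)
  X !=set0 -> vcompact X -> convex_set X ->
  Om !=set0 -> vclosed Om -> convex_set Om ->
  X `<=` Om -> Om `<=` DomF `&` DomH ->
  is_projection X PX -> is_projection Om POm ->
  VIsol F X !=set0 ->
  (* parameters *)
  0 < eta ->
  0 < lam_lo -> lam_lo <= lam_hi -> lam_hi < (LF + eta * LH)^-1 ->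
  (forall k, lam_lo <= lambda k <= lam_hi) ->
  (forall k, 0 <= alpha k) -> alpha 0%N <= 1 ->
  (forall k, alpha k.+1 <= (1 - betak (lambda k) (LF + eta * LH) eta mu) * alpha k) ->
  (* iterates: x_{-1} = x_0 ∈ X *)
  X (x 0%N) ->
  IneIREG F H PX POm alpha lambda (fun _ => eta) x y ->
  let L := LF + eta * LH in
  let beta_ := fun k => betak (lambda k) L eta mu in
  let beta := ((1 - lam_hi ^+ 2 * L ^+ 2)^-1 + (2 * lam_lo * eta * mu)^-1)^-1 in
  let Q := VIsol F X in
  forall k : nat, (1 <= k)%N ->
    - normbound H Q * setdist (ybar lambda eta beta_ y k) Q
      <= Gap (ybar lambda eta beta_ y k) H Q /\
    Gap (ybar lambda eta beta_ y k) H Q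
      <= (1 - beta) ^+ k / (2 * lam_lo * eta) *
         (setdiam X ^+ 2 + \sum_(j < k) pprev beta_ j * ineq_delta x alpha j).
Proof.
move=> LF_gt0 LH_gt0 mu_gt0 monF lipF _ lipH smonH _ cpX cvxX _ _ cvxOm XOm OmD
  projX projOm Q0 eta_gt0 lo_gt0 lo_hi hi_lt lambda_in alpha_ge0 alpha0_le1 alphaS_le
  Xx0 iter L beta_ beta Q k k_gt0.
have hiL : lam_hi ^+ 2 * L ^+ 2 < 1.
  by rewrite sqr_mul_lt1 ?(le_trans (ltW lo_gt0)) ?addr_gt0 ?mulr_gt0.
have gap_le q (Qq : Q q) := IneIREG_ybar_gap_le mu_gt0 eta_gt0 monF lipF lipH smonH
  cpX cvxX cvxOm XOm OmD projX projOm lo_gt0 lambda_in hiL alpha_ge0 alpha0_le1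
  alphaS_le Xx0 iter k_gt0 Qq.
split; last exact: Gap_le Q0 gap_le.
apply: Gap_ge_setdist Q0 gap_le _.
apply: lipschitz_norm_has_ubound cpX (ex_intro _ _ Xx0) _ lipH (ltW LH_gt0) _.
  by move=> u /XOm /OmD [].
by move=> q [].
Qed.
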